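(* Let $\rho$ be an entangled state on $\mathbb{C}^m\otimes\mathbb{C}^n$ and $\mathcal{E}_\rho=\{W : W \text{ is an EW and } \mathrm{tr}(W\rho)<0\}$. Then: (i) $\mathcal{E}_\rho$ is convex. (ii) $\rho^*$ is entangled, and $W\in\mathcal{E}_\rho$ if and only if $W^*\in\mathcal{E}_{\rho^*}$. Moreover, $\mathcal{E}_\rho$ contains a real EW if and only if $\mathcal{E}_\rho\cap\mathcal{E}_{\rho^*}\neq\emptyset$. (iii) If $\rho$ is PPT entangled, then $W\in\mathcal{E}_\rho$ if and only if $W^\Gamma\in\mathcal{E}_{\rho^\Gamma}$. (iv) If $\rho$ is PPT entangled and $\rho^+$ is separable, then $\mathrm{tr}(W\rho^* )\ge-\mathrm{tr}(W\rho)>0$ whenever $W\in\mathcal{E}_\rho$, and $\mathrm{tr}(W\rho)\ge-\mathrm{tr}(W\rho^* )>0$ whenever $W\in\mathcal{E}_{\rho^*}$. (v) If $\sigma=(U\otimes V)\rho(U\otimes V)^\dagger$ with $U,V$ unitary, then $(U\otimes V)W(U\otimes V)^\dagger\in\mathcal{E}_\sigma$ for every $W\in\mathcal{E}_\rho$, and $\mathcal{E}_\sigma=(U\otimes V)\mathcal{E}_\rho(U\otimes V)^\dagger$.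
   Context: An entanglement witness (EW) on $\mathbb{C}^m\otimes\mathbb{C}^n$ is a Hermitian matrix $W$ with $\mathrm{tr}(W\sigma)\ge0$ for all separable states $\sigma$ and $\mathrm{tr}(W\sigma)<0$ for at least one entangled state. A real EW is an EW whose matrix has real entries. $M^*$ is the entrywise complex conjugate, $\rho^+=\frac12(\rho+\rho^* )$, and $M^\Gamma$ denotes the partial transpose with respect to the first subsystem. A state is PPT if $\rho^\Gamma\ge0$. *)

From HB Require Import structures.
From mathcomp Require Import all_boot all_order all_algebra.
From mathcomp Require Export mxtens.
Set Implicit Arguments. Unset Strict Implicit. Unset Printing Implicit Defensive.
Import Order.TTheory GRing.Theory Num.Theory.
Local Open Scope ring_scope.

(* Operators on C^m (x) C^n
   are (m*n) x (m*n) matrices, with the index convention of [mxtens]: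
   the global index k corresponds to the pair (k %/ n, k %% n) given by
   [mxtens_unindex], the first component living in the first subsystem. *)

Section QI.
Variable C : numClosedFieldType.

Definition mxconj (p q : nat) (M : 'M[C]_(p, q)) : 'M[C]_(p, q) :=
  map_mx Num.conj M.

Definition adjmx (p q : nat) (M : 'M[C]_(p, q)) : 'M[C]_(q, p) :=
  (mxconj M)^T.

Definition hermitian (N : nat) (A : 'M[C]_N) : Prop := adjmx A = A.

Definition psd (N : nat) (A : 'M[C]_N) : Prop :=
  hermitian A /\ forall v : 'cV[C]_N, 0 <= (adjmx v *m A *m v) 0 0.

Definition is_state (N : nat) (A : 'M[C]_N) : Prop := psd A /\ \tr A = 1.

Definition unitary (N : nat) (U : 'M[C]_N) : Prop := U *m adjmx U = 1%:M.

Definition real_mx (N : nat) (W : 'M[C]_N) : Prop :=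
  forall i j, W i j \is Num.real.

Definition separable (m n : nat) (s : 'M[C]_(m * n)) : Prop :=
  exists (k : nat) (p : 'I_k -> C) (A : 'I_k -> 'M[C]_m) (B : 'I_k -> 'M[C]_n),
    [/\ forall i, 0 <= p i,
        \sum_i p i = 1,
        forall i, is_state (A i),
        forall i, is_state (B i)
      & s = \sum_i p i *: (tensmx (A i) (B i))].

Definition entangled (m n : nat) (rho : 'M[C]_(m * n)) : Prop :=
  is_state rho /\ ~ separable rho.

Definition EW (m n : nat) (W : 'M[C]_(m * n)) : Prop :=
  [/\ hermitian W,
      forall s : 'M[C]_(m * n), separable s -> 0 <= \tr (W *m s)
    & exists rho : 'M[C]_(m * n), entangled rho /\ \tr (W *m rho) < 0].

Definition Eset (m n : nat) (rho : 'M[C]_(m * n)) (W : 'M[C]_(m * n)) : Prop :=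
  EW W /\ \tr (W *m rho) < 0.

(* partial transpose with respect to the first subsystem *)
Definition ptrans (m n : nat) (M : 'M[C]_(m * n)) : 'M[C]_(m * n) :=
  \matrix_(k, l)
    M (mxtens_index ((mxtens_unindex l).1, (mxtens_unindex k).2))
      (mxtens_index ((mxtens_unindex k).1, (mxtens_unindex l).2)).

Definition PPT (m n : nat) (rho : 'M[C]_(m * n)) : Prop := psd (ptrans rho).

Definition rplus (N : nat) (rho : 'M[C]_N) : 'M[C]_N :=
  2^-1 *: (rho + mxconj rho).

End QI.

From Pilot Require Import Defs.
From HB Require Import structures.
From mathcomp Require Import all_boot all_order all_algebra.
From mathcomp Require Import mxtens.
Set Implicit Arguments. Unset Strict Implicit. Unset Printing Implicit Defensive.
Import Order.TTheory GRing.Theory Num.Theory.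
Local Open Scope ring_scope.

(* Complex conjugation, the partial transpose and a local unitary congruence
   by T = U (x) V all commute with nonnegative combinations and map product
   states to product states, hence preserve separability; they map states to
   states (the partial transpose only PPT ones) and are invertible within their
   class.  Each is self-dual for the trace pairing up to a sign-preserving
   conjugation: tr [W^* s^*] is the conjugate of tr [W s],
   tr [W^Gamma s^Gamma] = tr [W s] and tr [T W T^dagger T s T^dagger] = tr [W s].
   So each transports E_rho onto the E-set of the image of rho.  As rho itself is
   the entangled state an EW must detect, E_rho is an intersection of convex
   conditions on W; testing W on the separable state rho^+ gives (iv); and
   averaging W in E_rho /\ E_rho^* with W^* gives a real element of E_rho. *)

Section EntanglementWitnesses.
Variable C : numClosedFieldType.
Implicit Types (p q r k m n : nat).

Lemma conjC_lt0 (x : C) : (x^* < 0) = (x < 0).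
Proof. by rewrite -!oppr_gt0 -rmorphN lt0r conjC_ge0 conjC_eq0 -lt0r. Qed.

Lemma mxconjK p q (A : 'M[C]_(p, q)) : mxconj (mxconj A) = A.
Proof. by apply/matrixP=> i j; rewrite !mxE conjCK. Qed.

Lemma mxconjM p q r (A : 'M[C]_(p, q)) (B : 'M[C]_(q, r)) :
  mxconj (A *m B) = mxconj A *m mxconj B.
Proof. exact: map_mxM. Qed.

Lemma mxconjD p q (A B : 'M[C]_(p, q)) : mxconj (A + B) = mxconj A + mxconj B.
Proof. exact: map_mxD. Qed.

Lemma mxconj_tens m n p q (A : 'M[C]_(m, n)) (B : 'M[C]_(p, q)) :
  mxconj (tensmx A B) = tensmx (mxconj A) (mxconj B).
Proof. exact: map_mxT. Qed.

Lemma mxtrace_conj p (A : 'M[C]_p) : \tr (mxconj A) = (\tr A)^*.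
Proof. by rewrite /mxtrace rmorph_sum; apply: eq_bigr => i _; rewrite mxE. Qed.

Lemma adjmxK p q (A : 'M[C]_(p, q)) : adjmx (adjmx A) = A.
Proof. by apply/matrixP=> i j; rewrite !mxE conjCK. Qed.

Lemma adjmxM p q r (A : 'M[C]_(p, q)) (B : 'M[C]_(q, r)) :
  adjmx (A *m B) = adjmx B *m adjmx A.
Proof. by rewrite /adjmx mxconjM trmx_mul. Qed.

Lemma adjmxD p q (A B : 'M[C]_(p, q)) : adjmx (A + B) = adjmx A + adjmx B.
Proof. by rewrite /adjmx mxconjD linearD. Qed.

Lemma adjmxZ p q (a : C) (A : 'M[C]_(p, q)) : adjmx (a *: A) = a^* *: adjmx A.
Proof. by apply/matrixP=> i j; rewrite !mxE rmorphM. Qed.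

Lemma adjmx_conj p q (A : 'M[C]_(p, q)) : adjmx (mxconj A) = mxconj (adjmx A).
Proof. by apply/matrixP=> i j; rewrite !mxE. Qed.

Lemma adjmx_tr p q (A : 'M[C]_(p, q)) : adjmx A^T = (adjmx A)^T.
Proof. by apply/matrixP=> i j; rewrite !mxE. Qed.

Lemma adjmx_tens m n p q (A : 'M[C]_(m, n)) (B : 'M[C]_(p, q)) :
  adjmx (tensmx A B) = tensmx (adjmx A) (adjmx B).
Proof. by rewrite /adjmx mxconj_tens trmx_tens. Qed.

Lemma tens1mx1 m n : tensmx (1%:M : 'M[C]_m) (1%:M : 'M[C]_n) = 1%:M.
Proof.
apply/matrixP=> i j.
case: (mxtens_indexP i) => i1 i2; case: (mxtens_indexP j) => j1 j2.
by rewrite tensmxE !mxE -natrM mulnb (can_eq (@mxtens_indexK m n)) xpair_eqE.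
Qed.

Section Unitary.
Variable k : nat.
Implicit Types U T : 'M[C]_k.

Lemma unitary_mulVmx U : unitary U -> adjmx U *m U = 1%:M.
Proof. exact: mulmx1C. Qed.

Lemma unitary_adjmx U : unitary U -> unitary (adjmx U).
Proof. by move=> hU; rewrite /Defs.unitary adjmxK unitary_mulVmx. Qed.

Lemma unitary_congrK T (X : 'M[C]_k) :
  unitary T -> T *m (adjmx T *m X *m T) *m adjmx T = X.
Proof.
by move=> hT; rewrite !mulmxA hT mul1mx -mulmxA hT mulmx1.
Qed.

Lemma unitary_congrKV T (X : 'M[C]_k) :
  unitary T -> adjmx T *m (T *m X *m adjmx T) *m T = X.
Proof. by move/unitary_adjmx/(unitary_congrK X); rewrite adjmxK. Qed.

End Unitary.

Lemma tensmx_unitary m n (U : 'M[C]_m) (V : 'M[C]_n) :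
  unitary U -> unitary V -> unitary (tensmx U V).
Proof. by move=> hU hV; rewrite /Defs.unitary adjmx_tens tensmx_mul hU hV tens1mx1. Qed.

Section PositiveMaps.
Variable k : nat.
Implicit Types A : 'M[C]_k.

Lemma psd_conj A : psd A -> psd (mxconj A).
Proof.
case=> hA pA; split; first by rewrite /Defs.hermitian adjmx_conj hA.
move=> v; have -> : adjmx v *m mxconj A *m v =
                   mxconj (adjmx (mxconj v) *m A *m mxconj v).
  by rewrite !mxconjM adjmx_conj !mxconjK.
by rewrite mxE conjC_ge0.
Qed.

Lemma psd_tr A : psd A -> psd A^T.
Proof.
case=> hA pA; split; first by rewrite /Defs.hermitian adjmx_tr hA.
move=> v; rewrite -trace_mx11 -mxtrace_tr !trmx_mul trmxK mulmxA trace_mx11.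
by have := pA (mxconj v); rewrite /adjmx mxconjK trmxK.
Qed.

Lemma psd_congr l (X : 'M[C]_(k, l)) A : psd A -> psd (adjmx X *m A *m X).
Proof.
case=> hA pA; split; first by rewrite /Defs.hermitian !adjmxM adjmxK hA mulmxA.
by move=> v; rewrite -!mulmxA mulmxA -adjmxM mulmxA; apply: pA.
Qed.

Lemma is_state_conj A : is_state A -> is_state (mxconj A).
Proof. by case=> pA tA; split; [exact: psd_conj | rewrite mxtrace_conj tA conjC1]. Qed.

Lemma is_state_tr A : is_state A -> is_state A^T.
Proof. by case=> pA tA; split; [exact: psd_tr | rewrite mxtrace_tr]. Qed.

Lemma is_state_congr (U : 'M[C]_k) A :
  unitary U -> is_state A -> is_state (adjmx U *m A *m U).
Proof.
move=> hU [pA tA]; split; first exact: psd_congr.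
by rewrite mxtrace_mulC mulmxA hU mul1mx.
Qed.

End PositiveMaps.

(* Only nonnegative combinations are required because [mxconj] is merely
   conjugate-linear. *)
Lemma separable_map m n (f : 'M[C]_(m * n) -> 'M[C]_(m * n))
    (g : 'M[C]_m -> 'M[C]_m) (h : 'M[C]_n -> 'M[C]_n) :
  (forall k (c : 'I_k -> C) (X : 'I_k -> 'M[C]_(m * n)), (forall i, 0 <= c i) ->
     f (\sum_i c i *: X i) = \sum_i c i *: f (X i)) ->
  (forall A B, f (tensmx A B) = tensmx (g A) (h B)) ->
  (forall A, is_state A -> is_state (g A)) ->
  (forall B, is_state B -> is_state (h B)) ->
  forall s, separable s -> separable (f s).
Proof.
move=> f_comb f_tens g_state h_state s [k [c [A [B [c_ge0 c_sum1 A_st B_st ->]]]]].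
exists k, c, (fun i => g (A i)), (fun i => h (B i)); split=> // [i|i|].
- exact: g_state.
- exact: h_state.
by rewrite f_comb //; apply: eq_bigr => i _; rewrite f_tens.
Qed.

Lemma separable_conj m n (s : 'M[C]_(m * n)) : separable s -> separable (mxconj s).
Proof.
apply: (separable_map (g := @mxconj C m m) (h := @mxconj C n n)).
- move=> k c X c_ge0; apply/matrixP=> a b.
  rewrite !(mxE, summxE) rmorph_sum; apply: eq_bigr => i _.
  by rewrite !mxE rmorphM; congr (_ * _); exact/conj_Creal/ger0_real.
- exact: mxconj_tens.
- exact: is_state_conj.
- exact: is_state_conj.
Qed.

Lemma separable_congr m n (U : 'M[C]_m) (V : 'M[C]_n) (s : 'M[C]_(m * n)) :
  unitary U -> unitary V -> separable s ->
  separable (adjmx (tensmx U V) *m s *m tensmx U V).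
Proof.
move=> hU hV.
apply: (separable_map (f := fun s => adjmx (tensmx U V) *m s *m tensmx U V)
          (g := fun A => adjmx U *m A *m U) (h := fun B => adjmx V *m B *m V)).
- move=> k c X _; rewrite mulmx_sumr mulmx_suml; apply: eq_bigr => i _.
  by rewrite -scalemxAr -scalemxAl.
- by move=> A B; rewrite adjmx_tens !tensmx_mul.
- by move=> A; apply: is_state_congr.
- by move=> B; apply: is_state_congr.
Qed.

Section PartialTranspose.
Variables m n : nat.
Implicit Types A B W : 'M[C]_(m * n).

Lemma ptransK : involutive (@ptrans C m n).
Proof.
move=> A; apply/matrixP=> k l.
case: (mxtens_indexP k) => i j; case: (mxtens_indexP l) => i' j'.
by rewrite !mxE !mxtens_indexK.
Qed.

Lemma ptrans_lincomb k (c : 'I_k -> C) (X : 'I_k -> 'M[C]_(m * n)) :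
  ptrans (\sum_i c i *: X i) = \sum_i c i *: ptrans (X i).
Proof.
by apply/matrixP=> a b; rewrite !(mxE, summxE); apply: eq_bigr => i _; rewrite !mxE.
Qed.

Lemma ptrans_tens (A : 'M[C]_m) (B : 'M[C]_n) : ptrans (tensmx A B) = tensmx A^T B.
Proof.
apply/matrixP=> k l.
case: (mxtens_indexP k) => i j; case: (mxtens_indexP l) => i' j'.
by rewrite !mxE !mxtens_indexK.
Qed.

Lemma mxtrace_ptrans A : \tr (ptrans A) = \tr A.
Proof.
apply: eq_bigr => k _; rewrite mxE.
by case: (mxtens_indexP k) => i j; rewrite !mxtens_indexK.
Qed.

(* The entry (k, l) of [ptrans A] is the entry [ptrans_swap (k, l)] of [A]. *)
Let ptrans_swap (kl : 'I_(m * n) * 'I_(m * n)) : 'I_(m * n) * 'I_(m * n) :=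
  (mxtens_index ((mxtens_unindex kl.2).1, (mxtens_unindex kl.1).2),
   mxtens_index ((mxtens_unindex kl.1).1, (mxtens_unindex kl.2).2)).

Let ptrans_swapK : involutive ptrans_swap.
Proof.
move=> [k l]; case: (mxtens_indexP k) => i j; case: (mxtens_indexP l) => i' j'.
by rewrite /ptrans_swap !mxtens_indexK.
Qed.

Lemma mxtrace_mul_ptrans A B : \tr (ptrans A *m ptrans B) = \tr (A *m B).
Proof.
have trE N (X Y : 'M[C]_N) :
    \tr (X *m Y) = \sum_(kl : 'I_N * 'I_N) X kl.1 kl.2 * Y kl.2 kl.1.
  rewrite -(pair_bigA _ (fun i j => X i j * Y j i)).
  by apply: eq_bigr => i _; rewrite mxE.
rewrite !trE [RHS](reindex_inj (can_inj ptrans_swapK)).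
by apply: eq_bigr => -[k l] _; rewrite !mxE.
Qed.

Lemma hermitian_ptrans W : Defs.hermitian W -> Defs.hermitian (ptrans W).
Proof.
by move=> hW; apply/matrixP=> k l; rewrite -[in RHS]hW !mxE.
Qed.

Lemma separable_ptrans (s : 'M[C]_(m * n)) : separable s -> separable (ptrans s).
Proof.
apply: (separable_map (g := @trmx C m m) (h := id)) => //.
- by move=> k c X _; rewrite ptrans_lincomb.
- exact: ptrans_tens.
- exact: is_state_tr.
Qed.

End PartialTranspose.

Section WitnessSets.
Variables m n : nat.
Implicit Types rho W : 'M[C]_(m * n).

Lemma EsetE rho W : entangled rho ->
  Eset rho W <-> [/\ Defs.hermitian W,
                     forall s, separable s -> 0 <= \tr (W *m s)
                   & \tr (W *m rho) < 0].
Proof.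
move=> rho_ent; split; first by case=> -[hW W_sep _] W_rho.
by case=> hW W_sep W_rho; do !split=> //; exists rho.
Qed.

Lemma Eset_convex rho W1 W2 (t : C) : entangled rho -> 0 <= t -> t <= 1 ->
  Eset rho W1 -> Eset rho W2 -> Eset rho (t *: W1 + (1 - t) *: W2).
Proof.
move=> rho_ent t_ge0 t_le1 /(EsetE _ rho_ent)[h1 sep1 neg1].
move=> /(EsetE _ rho_ent)[h2 sep2 neg2].
have t'_ge0 : 0 <= 1 - t by rewrite subr_ge0.
have trE s : \tr ((t *: W1 + (1 - t) *: W2) *m s) =
             t * \tr (W1 *m s) + (1 - t) * \tr (W2 *m s).
  by rewrite mulmxDl -!scalemxAl mxtraceD !mxtraceZ.
apply/(EsetE _ rho_ent); split.
- rewrite /Defs.hermitian adjmxD !adjmxZ h1 h2.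
  by rewrite (conj_Creal (ger0_real t_ge0)) (conj_Creal (ger0_real t'_ge0)).
- by move=> s s_sep; rewrite trE addr_ge0 // mulr_ge0 ?sep1 ?sep2.
rewrite trE; have [->|t_neq0] := eqVneq t 0; first by rewrite mul0r add0r subr0 mul1r.
rewrite -[0](addr0 0) ltr_leD ?pmulr_rlt0 ?lt0r ?t_neq0 //.
by rewrite mulr_ge0_le0 // ltW.
Qed.

Lemma entangled_conj rho : entangled rho -> entangled (mxconj rho).
Proof.
case=> rho_st rho_ent; split; first exact: is_state_conj.
by move/separable_conj; rewrite mxconjK.
Qed.

Lemma Eset_conj rho W : entangled rho -> Eset rho W -> Eset (mxconj rho) (mxconj W).
Proof.
move=> rho_ent /(EsetE _ rho_ent)[hW W_sep W_rho].
apply/(EsetE _ (entangled_conj rho_ent)); split.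
- by rewrite /Defs.hermitian adjmx_conj hW.
- move=> s /separable_conj s_sep.
  by rewrite -[s]mxconjK -mxconjM mxtrace_conj conjC_ge0 W_sep.
- by rewrite -mxconjM mxtrace_conj conjC_lt0.
Qed.

Lemma Eset_conjE rho W :
  entangled rho -> Eset rho W <-> Eset (mxconj rho) (mxconj W).
Proof.
move=> rho_ent; split; first exact: Eset_conj.
by move/(Eset_conj (entangled_conj rho_ent)); rewrite !mxconjK.
Qed.

Lemma real_mx_conj W : real_mx W -> mxconj W = W.
Proof. by move=> W_real; apply/matrixP=> i j; rewrite mxE conj_Creal. Qed.

Lemma real_mx_rplus W : real_mx (rplus W).
Proof.
move=> i j; rewrite !mxE CrealE rmorphM rmorphD /= conjCK.
by rewrite (conj_Creal (ger0_real _)) ?invr_ge0 ?ler0n // addrC.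
Qed.

Lemma Eset_real rho : entangled rho ->
  (exists W, Eset rho W /\ real_mx W) <->
  (exists W, Eset rho W /\ Eset (mxconj rho) W).
Proof.
move=> rho_ent; split=> [[W [W_rho W_real]] | [W [W_rho W_rhoc]]].
  by exists W; split=> //; rewrite -(real_mx_conj W_real); apply: Eset_conj.
have Wc_rho : Eset rho (mxconj W).
  by move/(Eset_conj (entangled_conj rho_ent)): W_rhoc; rewrite mxconjK.
have half_le1 : 2^-1 <= 1 :> C by rewrite invf_le1 ?ltr0n // ler1n.
have half_compl : 1 - 2^-1 = 2^-1 :> C by rewrite {1}(splitr 1) mul1r addrK.
exists (rplus W); split; last exact: real_mx_rplus.
rewrite /rplus scalerDr -[in X in _ (_ + X)]half_compl.
by apply: Eset_convex; rewrite ?invr_ge0 ?ler0n.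
Qed.

Lemma entangled_ptrans rho : entangled rho -> PPT rho -> entangled (ptrans rho).
Proof.
case=> -[_ tr_rho] rho_ent rho_PPT; split.
  by split; rewrite ?mxtrace_ptrans.
by move/separable_ptrans; rewrite ptransK.
Qed.

Lemma Eset_ptrans rho W : entangled rho -> PPT rho ->
  Eset rho W -> Eset (ptrans rho) (ptrans W).
Proof.
move=> rho_ent rho_PPT /(EsetE _ rho_ent)[hW W_sep W_rho].
apply/(EsetE _ (entangled_ptrans rho_ent rho_PPT)); split.
- exact: hermitian_ptrans.
- by move=> s /separable_ptrans s_sep; rewrite -[s]ptransK mxtrace_mul_ptrans W_sep.
- by rewrite mxtrace_mul_ptrans.
Qed.

Lemma Eset_ptransE rho W : entangled rho -> PPT rho ->
  Eset rho W <-> Eset (ptrans rho) (ptrans W).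
Proof.
move=> rho_ent rho_PPT; split; first exact: Eset_ptrans.
have rhoT_PPT : PPT (ptrans rho) by rewrite /PPT ptransK; case: rho_ent => -[].
move/(Eset_ptrans (entangled_ptrans rho_ent rho_PPT) rhoT_PPT).
by rewrite !ptransK.
Qed.

Lemma rplus_conj rho : rplus (mxconj rho) = rplus rho.
Proof. by rewrite /rplus mxconjK addrC. Qed.

Lemma Eset_rplus rho W : separable (rplus rho) -> Eset rho W ->
  - \tr (W *m rho) <= \tr (W *m mxconj rho) /\ 0 < - \tr (W *m rho).
Proof.
move=> rhop_sep [[_ W_sep _] W_rho]; rewrite oppr_gt0; split=> //.
have := W_sep _ rhop_sep; rewrite /rplus -scalemxAr mxtraceZ mulmxDr mxtraceD.
by rewrite pmulr_rge0 ?invr_gt0 ?ltr0n // => ?; rewrite -subr_ge0 opprK addrC.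
Qed.

End WitnessSets.

Section LocalUnitary.
Variables (m n : nat) (U : 'M[C]_m) (V : 'M[C]_n).
Hypotheses (U_unitary : unitary U) (V_unitary : unitary V).
Let T := tensmx U V.
Let T_unitary : unitary T := tensmx_unitary U_unitary V_unitary.

Lemma entangled_congr rho : entangled rho -> entangled (T *m rho *m adjmx T).
Proof.
case=> rho_st rho_ent; split.
  by have := is_state_congr (unitary_adjmx T_unitary) rho_st; rewrite adjmxK.
by move/(separable_congr U_unitary V_unitary); rewrite unitary_congrKV.
Qed.

Lemma Eset_congr rho W : entangled rho ->
  Eset rho W -> Eset (T *m rho *m adjmx T) (T *m W *m adjmx T).
Proof.
move=> rho_ent /(EsetE _ rho_ent)[hW W_sep W_rho].
have trE X Y : \tr (T *m X *m adjmx T *m Y) = \tr (X *m (adjmx T *m Y *m T)).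
  by rewrite -!mulmxA mxtrace_mulC !mulmxA.
apply/(EsetE _ (entangled_congr rho_ent)); split.
- by rewrite /Defs.hermitian !adjmxM adjmxK hW mulmxA.
- by move=> s s_sep; rewrite trE; apply/W_sep/separable_congr.
- by rewrite trE unitary_congrKV.
Qed.

End LocalUnitary.

Lemma Eset_congrE m n (U : 'M[C]_m) (V : 'M[C]_n) (rho X : 'M[C]_(m * n)) :
  unitary U -> unitary V -> entangled rho ->
  Eset (tensmx U V *m rho *m adjmx (tensmx U V)) X <->
  exists W, Eset rho W /\ X = tensmx U V *m W *m adjmx (tensmx U V).
Proof.
move=> hU hV rho_ent; set T := tensmx U V.
split=> [X_E|[W [W_E ->]]]; last exact: Eset_congr.
have T_unitary : unitary T := tensmx_unitary hU hV.
exists (adjmx T *m X *m T); rewrite unitary_congrK //; split=> //.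
have sigma_ent := entangled_congr hU hV rho_ent.
have := Eset_congr (unitary_adjmx hU) (unitary_adjmx hV) sigma_ent X_E.
by rewrite -adjmx_tens adjmxK !unitary_congrKV.
Qed.

End EntanglementWitnesses.

Unset Implicit Arguments. Set Strict Implicit.

Theorem lemma3 (C : numClosedFieldType) (m n : nat) (rho : 'M[C]_(m * n)) :
  entangled rho ->
  (* (i) convexity *)
  (forall (W1 W2 : 'M[C]_(m * n)) (t : C), 0 <= t -> t <= 1 ->
     Eset rho W1 -> Eset rho W2 -> Eset rho (t *: W1 + (1 - t) *: W2)) /\
  (* (ii) *)
  (entangled (mxconj rho) /\
   (forall W : 'M[C]_(m * n), Eset rho W <-> Eset (mxconj rho) (mxconj W)) /\
   ((exists W : 'M[C]_(m * n), Eset rho W /\ real_mx W) <->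
    (exists W : 'M[C]_(m * n), Eset rho W /\ Eset (mxconj rho) W))) /\
  (* (iii) *)
  (PPT rho ->
   forall W : 'M[C]_(m * n), Eset rho W <-> Eset (ptrans rho) (ptrans W)) /\
  (* (iv) *)
  (PPT rho -> separable (rplus rho) ->
   (forall W : 'M[C]_(m * n), Eset rho W ->
      - \tr (W *m rho) <= \tr (W *m mxconj rho) /\ 0 < - \tr (W *m rho)) /\
   (forall W : 'M[C]_(m * n), Eset (mxconj rho) W ->
      - \tr (W *m mxconj rho) <= \tr (W *m rho) /\ 0 < - \tr (W *m mxconj rho))) /\
  (* (v) *)
  (forall (U : 'M[C]_m) (V : 'M[C]_n) (sigma : 'M[C]_(m * n)),
     unitary U -> unitary V ->
     sigma = (tensmx U V) *m rho *m adjmx (tensmx U V) ->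
     (forall W : 'M[C]_(m * n), Eset rho W ->
        Eset sigma ((tensmx U V) *m W *m adjmx (tensmx U V))) /\
     (forall X : 'M[C]_(m * n), Eset sigma X <->
        exists W : 'M[C]_(m * n), Eset rho W /\
                                  X = (tensmx U V) *m W *m adjmx (tensmx U V))).
Proof.
move=> rho_ent; split; first by move=> W1 W2 t; apply: Eset_convex.
split.
  split; first exact: entangled_conj.
  by split=> [W|]; [exact: Eset_conjE | exact: Eset_real].
split; first by move=> rho_PPT W; apply: Eset_ptransE.
split.
  move=> _ rhop_sep; split=> W; first exact: Eset_rplus.
  rewrite -rplus_conj in rhop_sep.
  by move/(Eset_rplus rhop_sep); rewrite mxconjK.
move=> U V sigma hU hV ->; split=> [W|X]; first exact: Eset_congr.
exact: Eset_congrE.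
Qed.
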